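(* Let $d_n=2^n\Delta_n+\tfrac12$ for $n\ge0$ and $d_n=0$ for $n<0$. Then for every $n\ge1$, $$d_n-\Big(2-\frac1n\Big)d_{n-1}+\Big(1-\frac1n\Big)d_{n-2}-\Big(4-\frac6n\Big)d_{n-3}+\Big(4-\frac8n\Big)d_{n-4}=0.$$ Consequently, for every $n\ge4$, $$\Delta_n=\frac{1}{n2^n}+\Big(\frac1{2n}-\frac14\Big)\Delta_{n-4}+\Big(\frac12-\frac{3}{4n}\Big)\Delta_{n-3}+\Big(\frac1{4n}-\frac14\Big)\Delta_{n-2}+\Big(1-\frac1{2n}\Big)\Delta_{n-1}.$$
   Context: A fair coin is flipped $n$ times, producing a sequence $x_1,\dots,x_n\in\{H,T\}$ of independent uniformly random outcomes. Alice's score is the number of indices $i\in\{1,\dots,n-1\}$ with $(x_i,x_{i+1})=(H,H)$; Bob's score is the number of indices $i\in\{1,\dots,n-1\}$ with $(x_i,x_{i+1})=(H,T)$. $\Delta_n$ is the probability that Bob's score strictly exceeds Alice's minus the probability that Alice's score strictly exceeds Bob's (so $\Delta_0=0$). *)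

From mathcomp Require Import all_boot all_order all_algebra.
Set Implicit Arguments. Unset Strict Implicit. Unset Printing Implicit Defensive.
Import Order.TTheory GRing.Theory Num.Theory.
Local Open Scope ring_scope.

(* Coin outcomes: true = H, false = T.  A sequence x_1..x_n is an n.-tuple bool,
   with x_{i+1} = nth false x i (0-based). *)

Definition alice_score (n : nat) (x : n.-tuple bool) : nat :=
  \sum_(i < n.-1) (nth false x i && nth false x i.+1 : nat).

Definition bob_score (n : nat) (x : n.-tuple bool) : nat :=
  \sum_(i < n.-1) (nth false x i && ~~ nth false x i.+1 : nat).

Definition prob (n : nat) (P : pred (n.-tuple bool)) : rat :=
  #|[set x : n.-tuple bool | P x]|%:R / #|{: n.-tuple bool}|%:R.

Definition Delta (n : nat) : rat :=
  prob (fun x : n.-tuple bool => (alice_score x < bob_score x)%N)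
  - prob (fun x : n.-tuple bool => (bob_score x < alice_score x)%N).

Definition dseq (m : int) : rat :=
  match m with
  | Posz n => 2 ^+ n * Delta n + 1 / 2
  | Negz _ => 0
  end.

From mathcomp Require Import all_boot all_order all_algebra.
From mathcomp Require Import zify ring.
Import Order.TTheory GRing.Theory Num.Theory.

(* Sort the sequences of length n+1 by their first n coins.  Appending a coin to
   a prefix ending in T does not change who leads, while appending H or T to a
   prefix ending in H moves the score difference by one in either direction.
   Hence M_(n+1) = 2 M_n + A_n - B_n for M_n = 2^n Delta_n, where A_n (B_n)
   counts the sequences ending in H in which Alice (Bob) leads by exactly one.
   A sequence ending in H with h heads and j pairs HT is made of j+1 runs of
   heads separated by j runs of tails, so there are C(h-1, j) C(n-h, j) of them;
   this yields the closed form 2 d_n = sum_m C(2m, m) C(n-2m, m).  The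
   recurrence for d_n then follows by creative telescoping: for c_m = C(2m, m)
   and b_m(z) = C(z-2m, m) the recurrence operator L satisfies
   c_m L(b_m)(z) = T_m(z) - T_(m+1)(z) for an explicit certificate T_m, and
   T_m(z) = 0 as soon as 3m > z. *)

Fixpoint bitseqs (n : nat) : seq bitseq :=
  if n is n'.+1 then [seq rcons s b | s <- bitseqs n', b <- [:: true; false]]
  else [:: [::]].

Lemma mem_bitseqs n s : (s \in bitseqs n) = (size s == n).
Proof.
elim: n s => [|n IHn] s; first by case: s.
apply/allpairsP/idP => [[[t b] [/= t_n _ ->]]|].
  by rewrite size_rcons eqSS -IHn.
case/lastP: s => [//|t b]; rewrite size_rcons eqSS -IHn => t_n.
by exists (t, b); rewrite /= t_n; case: b.
Qed.

Lemma bitseqs_uniq n : uniq (bitseqs n).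
Proof.
elim: n => [//|n IHn]; apply: allpairs_uniq => // -[s1 b1] [s2 b2] _ _ /= eq_s.
by case: (rcons_inj eq_s) => -> ->.
Qed.

Lemma big_tuple_bitseqs (R : nmodType) n (F : bitseq -> R) :
  (\sum_(x : n.-tuple bool) F x = \sum_(s <- bitseqs n) F s)%R.
Proof.
rewrite -big_enum -(big_map val xpredT F); apply/perm_big/uniq_perm.
- by rewrite (map_inj_uniq val_inj) enum_uniq.
- exact: bitseqs_uniq.
move=> s; rewrite mem_bitseqs; apply/mapP/idP => [[x _ ->]|s_n].
  by rewrite size_tuple.
by exists (Tuple s_n); rewrite ?mem_enum.
Qed.

Lemma big_bitseqsS (R : Type) (idx : R) (op : Monoid.com_law idx) n
    (F : bitseq -> R) :
  \big[op/idx]_(s <- bitseqs n.+1) F s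
  = \big[op/idx]_(s <- bitseqs n) op (F (rcons s true)) (F (rcons s false)).
Proof.
rewrite big_allpairs_dep; apply: eq_bigr => s _.
by rewrite !big_cons big_nil Monoid.mulm1.
Qed.

Fixpoint heads_then (q : pred bool) (s : bitseq) : nat :=
  if s is a :: t then (if t is b :: _ then (a && q b) + heads_then q t else 0)
  else 0.

Lemma heads_then_sum q s :
  \sum_(i < (size s).-1) (nth false s i && q (nth false s i.+1)) = heads_then q s.
Proof.
elim: s => [|a [|b t] IHs]; rewrite ?big_ord0 //.
by rewrite big_ord_recl; congr (_ + _); exact: IHs.
Qed.

Lemma alice_scoreE n (x : n.-tuple bool) : alice_score x = heads_then id x.
Proof. by rewrite -heads_then_sum size_tuple. Qed.

Lemma bob_scoreE n (x : n.-tuple bool) : bob_score x = heads_then negb x.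
Proof. by rewrite -heads_then_sum size_tuple. Qed.

Lemma heads_then_rcons q s c :
  heads_then q (rcons s c) = heads_then q s + (last false s && q c).
Proof.
elim: s => [//|a t IHs]; case: t IHs => [|b t] /= IHs; first by rewrite addn0.
by rewrite IHs addnA.
Qed.

Lemma count_rcons (T : Type) (a : pred T) s x : count a (rcons s x) = count a s + a x.
Proof. by rewrite -cats1 count_cat /= addn0. Qed.

Lemma heads_then_partition s :
  heads_then id s + heads_then negb s + last false s = count id s.
Proof.
elim/last_ind: s => [//|s c IHs].
rewrite !heads_then_rcons last_rcons count_rcons -IHs.
by case: c; case: (last false s) => /=; lia.
Qed.

Definition endH_count n h j : nat :=
  \sum_(s <- bitseqs n) [&& last false s, count id s == h & heads_then negb s == j].
Definition endT_count n h j : nat :=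
  \sum_(s <- bitseqs n) [&& ~~ last false s, count id s == h & heads_then negb s == j].

Lemma endH_countS n h j : endH_count n.+1 h j =
  if h is h'.+1 then endH_count n h' j + endT_count n h' j else 0.
Proof.
rewrite /endH_count /endT_count big_bitseqsS.
case: h => [|h]; [rewrite big1 // | rewrite -big_split; apply: eq_bigr] => s _;
  rewrite !last_rcons !heads_then_rcons !count_rcons /= addn1 ?andbF ?addn0 //.
by rewrite eqSS; case: (last false s); rewrite /= ?addn0.
Qed.

Lemma endT_countS n h j : endT_count n.+1 h j =
  endT_count n h j + (if j is j'.+1 then endH_count n h j' else 0).
Proof.
rewrite /endH_count /endT_count big_bitseqsS.
case: j => [|j]; [rewrite addn0 | rewrite addnC -big_split]; apply: eq_bigr => s _;
  rewrite !last_rcons !heads_then_rcons !count_rcons /= !addn0;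
  by case: (last false s); rewrite /= ?add0n ?addn0 ?addn1 ?eqSS ?andbF.
Qed.

Definition endH_closed n h j :=
  if h is h'.+1 then if h' < n then 'C(h', j) * 'C(n - h, j) else 0 else 0.
Definition endT_closed n h j :=
  match h, j with
  | 0, 0 => 1
  | h'.+1, j'.+1 => 'C(h', j') * 'C(n - h, j)
  | _, _ => 0
  end.

Lemma end_countsE n h j :
  endH_count n h j = endH_closed n h j /\ endT_count n h j = endT_closed n h j.
Proof.
elim: n h j => [|n IHn] h j.
  rewrite /endH_count /endT_count /= !big_seq1.
  by case: h => [|h]; case: j => [|j]; rewrite //= sub0n muln0.
have endH_n h1 j1 : endH_count n h1 j1 = endH_closed n h1 j1 by case: (IHn h1 j1).
have endT_n h1 j1 : endT_count n h1 j1 = endT_closed n h1 j1 by case: (IHn h1 j1).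
rewrite endH_countS endT_countS; split.
  case: h => [//|h]; rewrite !endH_n !endT_n.
  case: h => [|h] /=; first by case: j => [|j]; rewrite ?bin0.
  rewrite ltnS subSS; have [h_n|n_h] := ltnP h n.
    by case: j => [|j]; rewrite ?bin0 // binS mulnDl addnC.
  have /eqP -> : n - h.+1 == 0 by rewrite subn_eq0 leqW.
  by case: j => [|j]; rewrite ?muln0.
case: h => [|h]; case: j => [|j]; rewrite ?endH_n ?endT_n //= ?addn0.
rewrite subSS; have [h_n|n_h] := ltnP h n.
  by rewrite -(subnSK h_n) binS mulnDr.
have /eqP -> : n - h == 0 by rewrite subn_eq0.
have /eqP -> : n - h.+1 == 0 by rewrite subn_eq0 leqW.
by rewrite muln0.
Qed.

Definition alice_ahead n : nat := \sum_(s <- bitseqs n)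
  (last false s && (heads_then id s == (heads_then negb s).+1)).
Definition bob_ahead n : nat := \sum_(s <- bitseqs n)
  (last false s && (heads_then negb s == (heads_then id s).+1)).

Lemma sum_endH_by_HT n (f : nat -> nat) :
  \sum_(s <- bitseqs n) (last false s && (count id s == f (heads_then negb s)) : nat)
  = \sum_(j < n.+1) endH_count n (f j) j.
Proof.
rewrite /endH_count exchange_big /=; apply: eq_big_seq => s.
rewrite mem_bitseqs => /eqP size_s.
have HT_lt : heads_then negb s < n.+1.
  rewrite ltnS -size_s (leq_trans _ (count_size id s)) //.
  by rewrite -heads_then_partition addnAC leq_addl.
rewrite (bigD1 (Ordinal HT_lt)) //= eqxx andbT big1 ?addn0 // => j ne_j.
rewrite (_ : heads_then negb s == j = false) ?andbF //.
by apply: contraNF ne_j => /eqP HT_j; apply/eqP/val_inj.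
Qed.

Lemma endH_countE n h j : endH_count n h j = endH_closed n h j.
Proof. by case: (end_countsE n h j). Qed.

Lemma alice_aheadE n : alice_ahead n = \sum_(j < n) endH_closed n j.*2.+2 j.
Proof.
transitivity (\sum_(j < n.+1) endH_count n j.*2.+2 j).
  rewrite -(sum_endH_by_HT n (fun j => j.*2.+2)); apply: eq_big_seq => s _.
  have := heads_then_partition s.
  by case: (last false s) => //= part; congr (nat_of_bool _); apply/eqP/eqP; lia.
rewrite big_ord_recr endH_countE /= ifN ?addn0 -?leqNgt; last by lia.
by apply: eq_bigr => j _; rewrite endH_countE.
Qed.

Lemma bob_aheadE n : bob_ahead n = \sum_(j < n) endH_closed n j.+1.*2 j.+1.
Proof.
transitivity (\sum_(j < n.+1) endH_count n j.*2 j).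
  rewrite -(sum_endH_by_HT n double); apply: eq_big_seq => s _.
  have := heads_then_partition s.
  by case: (last false s) => //= part; congr (nat_of_bool _); apply/eqP/eqP; lia.
by rewrite big_ord_recl endH_countE add0n; apply: eq_bigr => j _; rewrite endH_countE.
Qed.

Definition margin_closed n := \sum_(k < n) 'C(k.*2.+1, k.+1) * 'C(n - k.*2.+2, k.+1).

Lemma bin_odd_sym k : 'C(k.*2.+1, k) = 'C(k.*2.+1, k.+1).
Proof. by rewrite -(@bin_sub k.*2.+1 k); [congr 'C(_, _); lia | lia]. Qed.

Lemma bin_central_succ k : 'C(k.+1.*2, k.+1) = 2 * 'C(k.*2.+1, k.+1).
Proof. by rewrite doubleS binS bin_odd_sym mul2n addnn. Qed.

Lemma margin_closedS n :
  margin_closed n.+1 + bob_ahead n = 2 * margin_closed n + alice_ahead n.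
Proof.
rewrite /margin_closed alice_aheadE bob_aheadE big_ord_recr /=.
rewrite (_ : n.+1 - n.*2.+2 = 0) ?bin0n ?muln0 ?addn0; last by lia.
rewrite big_distrr -!big_split /=; apply: eq_bigr => k _.
rewrite doubleS /= bin_odd_sym; have [k_n|n_k] := ltnP k.*2.+1 n.
  by rewrite subSn // (binS (n - k.*2.+2)) mulnDr; lia.
have /eqP -> : n.+1 - k.*2.+2 == 0 by rewrite subn_eq0.
have /eqP -> : n - k.*2.+2 == 0 by rewrite subn_eq0 leqW.
by rewrite muln0.
Qed.

Local Open Scope ring_scope.

Definition lead_sign (s : bitseq) : int :=
  Posz (heads_then id s < heads_then negb s)%N
  - Posz (heads_then negb s < heads_then id s)%N.

Definition margin n : int := \sum_(s <- bitseqs n) lead_sign s.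

Lemma Delta_margin n : Delta n = (margin n)%:~R / 2 ^+ n.
Proof.
have card_setE (P : pred (n.-tuple bool)) :
    #|[set x | P x]|%:R = \sum_x (P x)%:R :> rat.
  by rewrite -sum1dep_card natr_sum big_mkcond; apply: eq_bigr => x _; case: (P x).
rewrite /Delta /prob card_tuple card_bool natrX -mulrBl !card_setE -sumrB.
rewrite /margin rmorph_sum -(big_tuple_bitseqs _ _ (fun s => (lead_sign s)%:~R)).
congr (_ / _); apply: eq_bigr => x _.
by rewrite /lead_sign alice_scoreE bob_scoreE rmorphB.
Qed.

Lemma lead_rcons s :
  lead_sign (rcons s true) + lead_sign (rcons s false)
  = 2 * lead_sign s + Posz (last false s && (heads_then id s == (heads_then negb s).+1)%N)
    - Posz (last false s && (heads_then negb s == (heads_then id s).+1)%N).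
Proof. by rewrite /lead_sign !heads_then_rcons; case: (last false s) => /=; lia. Qed.

Lemma marginS n :
  margin n.+1 + Posz (bob_ahead n) = 2 * margin n + Posz (alice_ahead n).
Proof.
rewrite /margin /alice_ahead /bob_ahead !(big_morph Posz PoszD (erefl (Posz 0))).
rewrite big_bitseqsS mulr_sumr -!big_split /=.
by apply: eq_bigr => s _; rewrite lead_rcons; lia.
Qed.

Lemma marginE n : margin n = Posz (margin_closed n).
Proof.
elim: n => [|n IHn]; first by rewrite /margin /= big_seq1 /margin_closed big_ord0.
apply: (@addIr _ (Posz (bob_ahead n))).
by rewrite marginS IHn; have := margin_closedS n; lia.
Qed.

Definition central_bin (m : nat) : rat := 'C(m.*2, m)%:R.

(* Truncated subtraction is harmless: 'C(n - m.*2, m) = 0 whenever n < 3m. *)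
Definition diag_bin (m : nat) (z : int) : rat :=
  if z is Posz n then 'C(n - m.*2, m)%:R else 0.

Definition diag_sum (N : nat) (z : int) : rat :=
  \sum_(m < N) central_bin m * diag_bin m z.

Definition recurrence (f : int -> rat) (z : int) : rat :=
  z%:~R * f z - (2 * z%:~R - 1) * f (z - 1) + (z%:~R - 1) * f (z - 2)
  - (4 * z%:~R - 6) * f (z - 3) + (4 * z%:~R - 8) * f (z - 4).

Lemma central_binS m : m.+1%:R * central_bin m.+1 = (4 * m%:R + 2) * central_bin m.
Proof.
rewrite /central_bin (_ : 4 * m%:R + 2 = (4 * m + 2)%N%:R :> rat); last first.
  by rewrite natrD natrM.
rewrite -!natrM; congr _%:R.
have := mul_bin_diag m.+1.*2 m; have := mul_bin_down m.*2.+1 m.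
rewrite doubleS /= (_ : m.*2.+1 - m = m.+1)%N; last by lia.
move=> e1 e2; rewrite -e2 (_ : m.*2.+2 = 2 * m.+1)%N; last by lia.
by rewrite -mulnA -e1; nia.
Qed.

Lemma diag_bin_small m z : z < (3 * m)%N%:Z -> diag_bin m z = 0.
Proof. by case: z => [n|//] n_lt; rewrite /= bin_small //; lia. Qed.

Lemma diag_bin_shift m z :
  (z%:~R - 3 * m%:R) * diag_bin m z = (z%:~R - 2 * m%:R) * diag_bin m (z - 1).
Proof.
case: z => [[|n]|k]; last by rewrite (@diag_bin_small m (Negz k - 1)) /= ?mulr0 //; lia.
  rewrite (@diag_bin_small m (0 - 1)) ?mulr0; last by lia.
  by case: m => [|m]; rewrite ?subrr ?mul0r // diag_bin_small ?mulr0 //; lia.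
rewrite (_ : Posz n.+1 - 1 = Posz n); last by lia.
have [m3_n|n_m3] := leqP (3 * m) n.+1; last first.
  by rewrite !diag_bin_small ?mulr0 ?ltz_nat // ltnW.
have m2_n : (2 * m <= n.+1)%N by lia.
rewrite /diag_bin -pmulrn -!natrM -!natrB // -!natrM; congr _%:R.
have := mul_bin_down (n.+1 - m.*2) m.
by rewrite (_ : (n.+1 - m.*2).-1 = n - m.*2)%N -?mul2n; lia.
Qed.

Lemma diag_bin_pascal m z : diag_bin m.+1 z - diag_bin m.+1 (z - 1) = diag_bin m (z - 3).
Proof.
have [z_lt|] := ltP z (3 * m.+1)%N%:Z.
  by rewrite !diag_bin_small ?subrr //; lia.
case: z => [n|//] /[!lez_nat] m3_n.
have [k n_eq] : exists k, n = k.+3 by exists (n - 3)%N; lia.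
subst n; rewrite (_ : Posz k.+3 - 1 = Posz k.+2); last by lia.
rewrite (_ : Posz k.+3 - 3 = Posz k); last by lia.
rewrite /diag_bin doubleS !subSS subSn; last by lia.
by rewrite binS natrD addrAC subrr add0r.
Qed.

Definition telescoper (m : nat) (z : int) : rat :=
  m%:R * central_bin m
  * (3 * diag_bin m z - 5 * diag_bin m (z - 1) + 2 * diag_bin m (z - 2)).

Lemma recurrence_diag_bin m z :
  central_bin m * recurrence (diag_bin m) z = telescoper m z - telescoper m.+1 z.
Proof.
have pascal0 := diag_bin_pascal m z.
have pascal1 := diag_bin_pascal m (z - 1).
have shift0 := diag_bin_shift m z.
have shift1 := diag_bin_shift m (z - 1).
have shift3 := diag_bin_shift m (z - 3).
have z2 : z - 1 - 1 = z - 2 by lia.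
have z4 : z - 1 - 3 = z - 4 by lia.
have z4' : z - 3 - 1 = z - 4 by lia.
rewrite z2 z4 in pascal1; rewrite z2 in shift1; rewrite z4' in shift3.
have next : 3 * diag_bin m.+1 z - 5 * diag_bin m.+1 (z - 1) + 2 * diag_bin m.+1 (z - 2)
    = 3 * diag_bin m (z - 3) - 2 * diag_bin m (z - 4).
  by rewrite -pascal0 -pascal1; ring.
have shifts : (z%:~R - 3 * m%:R) * diag_bin m z - (z%:~R - 2 * m%:R) * diag_bin m (z - 1)
  - (((z - 1)%:~R - 3 * m%:R) * diag_bin m (z - 1)
     - ((z - 1)%:~R - 2 * m%:R) * diag_bin m (z - 2))
  - 4 * (((z - 3)%:~R - 3 * m%:R) * diag_bin m (z - 3)
         - ((z - 3)%:~R - 2 * m%:R) * diag_bin m (z - 4)) = 0.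
  by rewrite shift0 shift1 shift3 !subrr; ring.
apply/eqP; rewrite /telescoper central_binS next -subr_eq0.
by rewrite -(mulr0 (central_bin m)) -shifts /recurrence !intrB; apply/eqP; ring.
Qed.

Lemma recurrence_diag_sum N z : z < (3 * N)%N%:Z -> recurrence (diag_sum N) z = 0.
Proof.
move=> z_lt; transitivity (\sum_(m < N) central_bin m * recurrence (diag_bin m) z).
  rewrite /recurrence /diag_sum !mulr_sumr -sumrB -big_split -sumrB -big_split /=.
  by apply: eq_bigr => m _; ring.
rewrite -(big_mkord xpredT (fun m => central_bin m * recurrence (diag_bin m) z)).
rewrite (telescope_sumr_eq (fun m => - telescoper m z)) // => [|m _]; last first.
  by rewrite recurrence_diag_bin opprK addrC.
rewrite /telescoper !mul0r oppr0 subr0 !(@diag_bin_small N) ?mulr0 ?oppr0 //; lia.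
Qed.

Lemma diag_sum_margin N n : (n < N)%N -> diag_sum N n = 2 * (margin_closed n)%:R + 1.
Proof.
case: N => // N; rewrite ltnS => n_N.
rewrite /diag_sum big_ord_recl /central_bin /diag_bin /= subn0 !bin0 mulr1 addrC.
congr (_ + 1); rewrite /margin_closed natr_sum mulr_sumr.
rewrite (big_ord_widen N
  (fun k => 2 * ('C(k.*2.+1, k.+1) * 'C(n - k.*2.+2, k.+1))%:R)) //.
rewrite [RHS]big_mkcond /=; apply: eq_bigr => k _.
rewrite /bump /= add1n bin_central_succ doubleS; case: ifP => k_n.
  by rewrite !natrM mulrA.
by rewrite (@bin_small (n - k.*2.+2)) ?mulr0 //; move/negbT: k_n; lia.
Qed.

Lemma dseq_diag_sum N z : z < N%:Z -> dseq z = diag_sum N z / 2.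
Proof.
case: z => [n|k] z_lt; last by rewrite /diag_sum big1 ?mul0r // => m _; rewrite mulr0.
rewrite diag_sum_margin -?ltz_nat // /= Delta_margin marginE -pmulrn.
have two_n_neq0 : (2 : rat) ^+ n != 0 by rewrite expf_neq0.
by field.
Qed.

Lemma dseq_recurrence z : recurrence dseq z = 0.
Proof.
have z_lt k : z - k%:Z < `|z|.+1%:Z by lia.
rewrite -[RHS](mulr0 (1 / 2)) -(@recurrence_diag_sum `|z|.+1 z); last by lia.
rewrite /recurrence !(@dseq_diag_sum `|z|.+1) ?z_lt //; last by lia.
by ring.
Qed.

Theorem mainTheorem15 :
  (forall n : nat, (1 <= n)%N ->
     dseq n%:Z
     - (2 - 1 / n%:R) * dseq (n%:Z - 1)
     + (1 - 1 / n%:R) * dseq (n%:Z - 2)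
     - (4 - 6 / n%:R) * dseq (n%:Z - 3)
     + (4 - 8 / n%:R) * dseq (n%:Z - 4) = 0)
  /\
  (forall n : nat, (4 <= n)%N ->
     Delta n =
       1 / (n%:R * 2 ^+ n)
       + (1 / (2 * n%:R) - 1 / 4) * Delta (n - 4)
       + (1 / 2 - 3 / (4 * n%:R)) * Delta (n - 3)
       + (1 / (4 * n%:R) - 1 / 4) * Delta (n - 2)
       + (1 - 1 / (2 * n%:R)) * Delta (n - 1)).
Proof.
split=> [n n_gt0 | n n_ge4].
  have n_neq0 : n%:R != 0 :> rat by rewrite pnatr_eq0 -lt0n.
  by rewrite -[RHS](mul0r n%:R^-1) -(dseq_recurrence n) /recurrence -pmulrn; field.
have [k ->] : exists k, n = k.+4 by exists (n - 4)%N; lia.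
have := dseq_recurrence k.+4; rewrite /recurrence -pmulrn.
have -> : k.+4%:Z - 1 = k.+3 by lia.
have -> : k.+4%:Z - 2 = k.+2 by lia.
have -> : k.+4%:Z - 3 = k.+1 by lia.
have -> : k.+4%:Z - 4 = k by lia.
rewrite /= !subSS !subn0 => rec.
apply/eqP; rewrite -subr_eq0 -[0](mul0r (k.+4%:R * 2 ^+ k.+4)^-1) -rec !exprS.
apply/eqP; field; rewrite expf_neq0 //=.
by rewrite -(natrD _ 4 k) pnatr_eq0.
Qed.
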